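(* Consider Model A with $\delta>-1$. There exists a constant $C'>0$ (depending only on $\delta$) such that $$\bigl|\mathbf E(N_{>k}(n))-np_{>k}\bigr|\le C'\qquad\text{for all } n\ge1,\ k\ge1.$$
   Context: Model A (with $\delta>-1$): $G(1)$ consists of a single node $v_1$ with a self loop (so $v_1$ has degree 2; a self loop contributes 2 to the degree). For $n\ge1$, given $G(n)$ (nodes $v_1,\dots,v_n$, $n$ edges), $G(n+1)$ is obtained by adding a new node $v_{n+1}$ and one edge joining $v_{n+1}$ to an existing node $v_i$, $1\le i\le n$, chosen with probability $\frac{D_i(n)+\delta}{(2+\delta)n}$, where $D_i(n)$ is the degree of $v_i$ in $G(n)$. $N_{>k}(n):=\#\{1\le i\le n: D_i(n)>k\}$ for $k\ge1$, $N_{>0}(n):=n$. For $k\ge0$, $$p_{>k}:=\frac{\Gamma(k+1+\delta)\,\Gamma(3+2\delta)}{\Gamma(k+3+2\delta)\,\Gamma(1+\delta)}.$$ *)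

From Stdlib Require Import Reals List Arith.
Import ListNotations.
Open Scope R_scope.

(* Model A is a Markov chain whose state relevant to N_{>k} is the degree
   sequence [D_1(n); ...; D_n(n)] of G(n).  We represent the law of G(n)
   exactly as a finite list of (probability, degree sequence) outcomes. *)

Fixpoint incr_at (i : nat) (l : list nat) : list nat :=
  match l, i with
  | [], _ => []
  | d :: l', O => S d :: l'
  | d :: l', S i' => d :: incr_at i' l'
  end.

(* one step G(n) -> G(n+1): new node v_{n+1} (degree 1) attaches to v_{i+1}
   with probability (D_{i+1}(n)+delta)/((2+delta) n), where n = length ds *)
Definition modelA_step (delta : R) (o : R * list nat) : list (R * list nat) :=
  let (p, ds) := o in
  map (fun i => (p * ((INR (nth i ds O) + delta) / ((2 + delta) * INR (length ds))),
                 incr_at i ds ++ [1%nat]))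
      (seq 0 (length ds)).

(* modelA_law delta m = law of the degree sequence of G(m+1);
   G(1) = single node with a self loop, degree 2. *)
Fixpoint modelA_law (delta : R) (m : nat) : list (R * list nat) :=
  match m with
  | O => [(1, [2%nat])]
  | S m' => flat_map (modelA_step delta) (modelA_law delta m')
  end.

Definition expect (delta : R) (n : nat) (f : list nat -> R) : R :=
  fold_right (fun o acc => fst o * f (snd o) + acc) 0 (modelA_law delta (n - 1)).

Definition N_gt (k : nat) (ds : list nat) : R :=
  INR (length (filter (fun d => Nat.ltb k d) ds)).

(* p_{>k} = Gamma(k+1+delta) Gamma(3+2delta) / (Gamma(k+3+2delta) Gamma(1+delta))
   written via Gamma(x+k)/Gamma(x) = prod_{j<k} (x+j)  (x = 1+delta > 0,
   x = 3+2delta > 0); Stdlib has no Gamma function. *)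
Fixpoint p_gt (delta : R) (k : nat) : R :=
  match k with
  | O => 1
  | S k' => p_gt delta k' * ((1 + delta + INR k') / (3 + 2 * delta + INR k'))
  end.

From Stdlib Require Import Reals List Arith Lra Lia Psatz.
Import ListNotations.
Open Scope R_scope.

(** Write [e_n(k) = E N_{>k}(n) - n p_{>k}].  A vertex of degree [k] is hit
    with probability [w = (k+δ)/((2+δ)n)], and only such a hit changes
    [N_{>k}], so [E N_{>k}(n+1) = (1-w) E N_{>k}(n) + w E N_{>k-1}(n)] exactly.
    The product formula gives [(2+δ) p_{>k} = (k+δ)(p_{>k-1} - p_{>k})], which
    makes [(n+1) p_{>k}] obey the same recursion, so
    [e_{n+1}(k) = (1-w) e_n(k) + w e_n(k-1)].  While [k <= n+1] the weight [w]
    lies in [[0,1]] and [|e| <= 1] propagates; beyond that [N_{>k}(n) = 0]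
    (degrees are at most [n+1]) and [n p_{>k} <= (k+1) p_{>k} <= 1].
    Hence [C' = 1]. *)

Definition sumR {A : Type} (g : A -> R) (l : list A) : R :=
  fold_right (fun x acc => g x + acc) 0 l.

Lemma sumR_app {A : Type} (g : A -> R) (l1 l2 : list A) :
  sumR g (l1 ++ l2) = sumR g l1 + sumR g l2.
Proof. induction l1 as [|x l1 IH]; simpl; [lra|]. rewrite IH; ring. Qed.

Lemma sumR_ext_in {A : Type} (g h : A -> R) (l : list A) :
  (forall x, In x l -> g x = h x) -> sumR g l = sumR h l.
Proof.
  induction l as [|x l IH]; intros Hgh; simpl; [reflexivity|].
  rewrite Hgh by (left; reflexivity). f_equal. apply IH. intros y Hy. apply Hgh. right; exact Hy.
Qed.

Lemma sumR_plus {A : Type} (g h : A -> R) (l : list A) :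
  sumR (fun x => g x + h x) l = sumR g l + sumR h l.
Proof. induction l as [|x l IH]; simpl; [lra|]. rewrite IH; ring. Qed.

Lemma sumR_scale {A : Type} (c : R) (g : A -> R) (l : list A) :
  sumR (fun x => c * g x) l = c * sumR g l.
Proof. induction l as [|x l IH]; simpl; [ring|]. rewrite IH; ring. Qed.

Lemma sumR_map {A B : Type} (g : B -> R) (h : A -> B) (l : list A) :
  sumR g (map h l) = sumR (fun x => g (h x)) l.
Proof. induction l as [|x l IH]; simpl; [reflexivity|]. rewrite IH; reflexivity. Qed.

Lemma sumR_flat_map {A B : Type} (g : B -> R) (h : A -> list B) (l : list A) :
  sumR g (flat_map h l) = sumR (fun x => sumR g (h x)) l.
Proof. induction l as [|x l IH]; simpl; [reflexivity|]. rewrite sumR_app, IH; reflexivity. Qed.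

Lemma sumR_seq_nth (g : nat -> R) (l : list nat) :
  sumR (fun i => g (nth i l O)) (seq 0 (length l)) = sumR g l.
Proof.
  induction l as [|d l IH]; simpl; [reflexivity|]. f_equal.
  rewrite <- seq_shift, sumR_map. exact IH.
Qed.

Definition expectation (law : list (R * list nat)) (f : list nat -> R) : R :=
  sumR (fun o => fst o * f (snd o)) law.

Lemma expectation_ext_in law f g :
  (forall o, In o law -> f (snd o) = g (snd o)) -> expectation law f = expectation law g.
Proof. intros Hfg. apply sumR_ext_in. intros o Ho. rewrite Hfg by exact Ho. reflexivity. Qed.

Lemma expectation_plus law f g :
  expectation law (fun ds => f ds + g ds) = expectation law f + expectation law g.
Proof.
  unfold expectation. rewrite <- sumR_plus. apply sumR_ext_in. intros o _. ring.
Qed.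

Lemma expectation_scale law c f :
  expectation law (fun ds => c * f ds) = c * expectation law f.
Proof.
  unfold expectation. rewrite <- sumR_scale. apply sumR_ext_in. intros o _. ring.
Qed.

Definition attach_weight (delta : R) (n d : nat) : R :=
  (INR d + delta) / ((2 + delta) * INR n).

Lemma attach_weight_bounds delta n d : -1 < delta -> (1 <= n)%nat -> (1 <= d <= S n)%nat ->
  0 <= attach_weight delta n d <= 1.
Proof.
  intros Hd Hn Hdn.
  assert (Hn' : 1 <= INR n) by (apply (le_INR 1); exact Hn).
  assert (Hd1 : 1 <= INR d) by (apply (le_INR 1); lia).
  assert (Hdn' : INR d <= INR n + 1) by (rewrite <- S_INR; apply le_INR; lia).
  assert (Hden : 0 < (2 + delta) * INR n) by nra.
  assert (Hw : attach_weight delta n d * ((2 + delta) * INR n) = INR d + delta)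
    by (unfold attach_weight; field; lra).
  split; nra.
Qed.

Definition step_mean (delta : R) (f : list nat -> R) (ds : list nat) : R :=
  sumR (fun i => attach_weight delta (length ds) (nth i ds O) * f (incr_at i ds ++ [1%nat]))
       (seq 0 (length ds)).

Lemma expectation_step delta law f :
  expectation (flat_map (modelA_step delta) law) f = expectation law (step_mean delta f).
Proof.
  unfold expectation. rewrite sumR_flat_map. apply sumR_ext_in. intros [p ds] _.
  unfold modelA_step, step_mean. rewrite sumR_map, <- sumR_scale. simpl.
  apply sumR_ext_in. intros i _. unfold attach_weight. ring.
Qed.

Lemma length_incr_at i l : length (incr_at i l) = length l.
Proof. revert i; induction l as [|d l IH]; intros [|i]; simpl; auto. Qed.

Lemma list_sum_incr_at i l : (i < length l)%nat -> list_sum (incr_at i l) = S (list_sum l).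
Proof.
  revert i; induction l as [|d l IH]; intros [|i] Hi; simpl in *; try lia.
  rewrite IH by lia. lia.
Qed.

Lemma Forall_incr_at (P Q : nat -> Prop) i l :
  (forall d, P d -> Q d) -> (forall d, P d -> Q (S d)) ->
  Forall P l -> Forall Q (incr_at i l).
Proof.
  intros HPQ HPS. revert i; induction l as [|d l IH]; intros [|i] Hl; simpl; auto;
    inversion Hl; subst; constructor; auto.
  eapply Forall_impl; eassumption.
Qed.

Definition degree_seq (n : nat) (ds : list nat) : Prop :=
  length ds = n /\ list_sum ds = (2 * n)%nat /\ Forall (fun d => 1 <= d <= S n)%nat ds.

Lemma modelA_law_degree_seq delta m o :
  In o (modelA_law delta m) -> degree_seq (S m) (snd o).
Proof.
  revert o; induction m as [|m IH]; intros o Ho; simpl in Ho.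
  - destruct Ho as [<-|[]]. repeat constructor.
  - apply in_flat_map in Ho as [[p ds] [Hds Ho]].
    destruct (IH _ Hds) as [Hlen [Hsum Hdeg]]; simpl in *.
    apply in_map_iff in Ho as [i [<- Hi]]. apply in_seq in Hi. simpl.
    repeat split.
    + rewrite length_app, length_incr_at. simpl. lia.
    + rewrite list_sum_app, list_sum_incr_at by lia. simpl. lia.
    + apply Forall_app. split.
      * apply Forall_incr_at with (P := fun d => (1 <= d <= S (S m))%nat); auto; intros; lia.
      * constructor; [lia|constructor].
Qed.

Lemma N_gt_app_1 k l : (1 <= k)%nat -> N_gt k (l ++ [1%nat]) = N_gt k l.
Proof.
  intros Hk. unfold N_gt. rewrite filter_app, length_app. simpl.
  destruct (Nat.ltb_spec k 1); [lia|]. simpl. rewrite Nat.add_0_r. reflexivity.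
Qed.

Lemma N_gt_incr_at k i l : (i < length l)%nat ->
  N_gt k (incr_at i l) = N_gt k l + (if Nat.eq_dec (nth i l O) k then 1 else 0).
Proof.
  unfold N_gt. revert i; induction l as [|d l IH]; intros [|i] Hi; simpl in Hi; try lia.
  - simpl. destruct (Nat.ltb_spec k (S d)), (Nat.ltb_spec k d), (Nat.eq_dec d k);
      try lia; simpl length; rewrite ?S_INR; lra.
  - simpl. rewrite <- Nat.succ_lt_mono in Hi.
    destruct (Nat.ltb k d); simpl length; rewrite ?S_INR, IH by exact Hi; lra.
Qed.

Lemma N_gt_pred k l : N_gt k l = N_gt (S k) l + INR (count_occ Nat.eq_dec l (S k)).
Proof.
  unfold N_gt. induction l as [|d l IH]; simpl; [lra|].
  destruct (Nat.ltb_spec k d), (Nat.ltb_spec (S k) d), (Nat.eq_dec d (S k));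
    try lia; simpl length; rewrite ?S_INR; lra.
Qed.

Lemma N_gt_0 l : Forall (fun d => 1 <= d)%nat l -> N_gt 0 l = INR (length l).
Proof.
  unfold N_gt. intros Hl. f_equal. induction Hl as [|d l Hd _ IH]; simpl; [reflexivity|].
  destruct (Nat.ltb_spec 0 d); [simpl; rewrite IH|]; lia.
Qed.

Lemma N_gt_above k l : Forall (fun d => d <= k)%nat l -> N_gt k l = 0.
Proof.
  unfold N_gt. intros Hl. replace (filter _ l) with (@nil nat); [reflexivity|].
  induction Hl as [|d l Hd _ IH]; simpl; [reflexivity|].
  destruct (Nat.ltb_spec k d); [lia|exact IH].
Qed.

Lemma sumR_degree_weight delta l :
  sumR (fun d => INR d + delta) l = INR (list_sum l) + INR (length l) * delta.
Proof.
  induction l as [|d l IH]; simpl sumR; simpl list_sum; simpl length; [simpl; ring|].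
  rewrite IH, plus_INR, S_INR. ring.
Qed.

Lemma sumR_degree_weight_eq delta k l :
  sumR (fun d => (INR d + delta) * (if Nat.eq_dec d k then 1 else 0)) l =
  (INR k + delta) * INR (count_occ Nat.eq_dec l k).
Proof.
  induction l as [|d l IH]; simpl; [ring|]. rewrite IH.
  destruct (Nat.eq_dec d k) as [->|]; rewrite ?S_INR; ring.
Qed.

Lemma attach_weight_sum delta n ds : -1 < delta -> (1 <= n)%nat -> degree_seq n ds ->
  sumR (fun i => attach_weight delta (length ds) (nth i ds O)) (seq 0 (length ds)) = 1.
Proof.
  intros Hd Hn [Hlen [Hsum _]].
  assert (Hn' : 0 < INR n) by (apply lt_0_INR; lia).
  unfold attach_weight, Rdiv.
  rewrite (sumR_ext_in _ (fun i => / ((2 + delta) * INR (length ds)) *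
                                   (INR (nth i ds O) + delta))) by (intros; ring).
  rewrite sumR_scale, (sumR_seq_nth (fun d => INR d + delta)), sumR_degree_weight.
  rewrite Hsum, Hlen, mult_INR. simpl (INR 2). field. lra.
Qed.

Lemma step_mean_const delta n ds c : -1 < delta -> (1 <= n)%nat -> degree_seq n ds ->
  step_mean delta (fun _ => c) ds = c.
Proof.
  intros Hd Hn Hds. unfold step_mean. rewrite (sumR_ext_in _ (fun i => c *
    attach_weight delta (length ds) (nth i ds O))) by (intros; ring).
  rewrite sumR_scale, (attach_weight_sum delta n) by assumption. ring.
Qed.

Lemma step_mean_N_gt delta n ds k : -1 < delta -> (1 <= n)%nat -> degree_seq n ds ->
  step_mean delta (N_gt (S k)) ds =
  (1 - attach_weight delta n (S k)) * N_gt (S k) ds + attach_weight delta n (S k) * N_gt k ds.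
Proof.
  intros Hd Hn Hds. unfold step_mean.
  rewrite (sumR_ext_in _ (fun i => N_gt (S k) ds * attach_weight delta (length ds) (nth i ds O)
     + / ((2 + delta) * INR (length ds)) *
       ((fun d => (INR d + delta) * (if Nat.eq_dec d (S k) then 1 else 0)) (nth i ds O)))).
  2: { intros i Hi. apply in_seq in Hi.
       rewrite N_gt_app_1, N_gt_incr_at by lia. unfold attach_weight. field.
       destruct Hds as [<- _]. split; [apply not_0_INR; lia|lra]. }
  rewrite sumR_plus, sumR_scale, sumR_scale, (attach_weight_sum delta n) by assumption.
  rewrite (sumR_seq_nth (fun d => (INR d + delta) * (if Nat.eq_dec d (S k) then 1 else 0))).
  rewrite sumR_degree_weight_eq, (N_gt_pred k).
  destruct Hds as [-> _]. unfold attach_weight, Rdiv. ring.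
Qed.

Lemma expectation_one delta m : -1 < delta -> expectation (modelA_law delta m) (fun _ => 1) = 1.
Proof.
  intros Hd. induction m as [|m IH]; [simpl; ring|].
  simpl modelA_law. rewrite expectation_step. rewrite <- IH at 1.
  apply expectation_ext_in. intros o Ho.
  apply (step_mean_const delta (S m)); [exact Hd|lia|].
  exact (modelA_law_degree_seq _ _ _ Ho).
Qed.

Lemma expectation_N_gt_succ delta m k : -1 < delta ->
  expectation (modelA_law delta (S m)) (N_gt (S k)) =
  (1 - attach_weight delta (S m) (S k)) * expectation (modelA_law delta m) (N_gt (S k)) +
  attach_weight delta (S m) (S k) * expectation (modelA_law delta m) (N_gt k).
Proof.
  intros Hd. simpl modelA_law.
  rewrite expectation_step, <- !expectation_scale, <- expectation_plus.
  apply expectation_ext_in. intros o Ho.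
  apply step_mean_N_gt; [exact Hd|lia|exact (modelA_law_degree_seq _ _ _ Ho)].
Qed.

Lemma expectation_N_gt_0 delta m : -1 < delta ->
  expectation (modelA_law delta m) (N_gt 0) = INR (S m).
Proof.
  intros Hd. rewrite <- (Rmult_1_r (INR (S m))), <- (expectation_one delta m Hd),
    <- expectation_scale.
  apply expectation_ext_in. intros o Ho.
  destruct (modelA_law_degree_seq _ _ _ Ho) as [Hlen [_ Hdeg]].
  rewrite N_gt_0, Hlen; [ring|]. eapply Forall_impl; [|exact Hdeg]. simpl; lia.
Qed.

Lemma expectation_N_gt_above delta m k : (S (S m) <= k)%nat ->
  expectation (modelA_law delta m) (N_gt k) = 0.
Proof.
  intros Hk. rewrite <- (Rmult_0_l (expectation (modelA_law delta m) (fun _ => 0))),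
    <- expectation_scale.
  apply expectation_ext_in. intros o Ho.
  destruct (modelA_law_degree_seq _ _ _ Ho) as [_ [_ Hdeg]].
  rewrite N_gt_above; [ring|]. eapply Forall_impl; [|exact Hdeg]. simpl; lia.
Qed.

Lemma p_gt_pos delta k : -1 < delta -> 0 < p_gt delta k.
Proof.
  intros Hd. induction k as [|k IH]; simpl; [lra|].
  pose proof (pos_INR k). apply Rmult_lt_0_compat; [exact IH|apply Rdiv_lt_0_compat; lra].
Qed.

Lemma p_gt_mul_succ_le delta k : -1 < delta -> INR (S k) * p_gt delta k <= 1.
Proof.
  intros Hd. induction k as [|k IH]; [simpl; lra|].
  pose proof (pos_INR k). pose proof (p_gt_pos delta k Hd).
  rewrite S_INR in *. simpl p_gt. rewrite S_INR.
  assert (Hratio : (INR k + 1 + 1) * ((1 + delta + INR k) / (3 + 2 * delta + INR k))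
                   <= INR k + 1).
  { apply Rmult_le_reg_r with (3 + 2 * delta + INR k); [lra|].
    unfold Rdiv. rewrite Rmult_assoc, (Rmult_assoc (1 + delta + INR k)), Rinv_l by lra.
    nra. }
  nra.
Qed.

Lemma p_gt_mul_le delta n k : -1 < delta -> (n <= S k)%nat -> 0 <= INR n * p_gt delta k <= 1.
Proof.
  intros Hd Hn. pose proof (p_gt_pos delta k Hd). pose proof (p_gt_mul_succ_le delta k Hd).
  assert (INR n <= INR (S k)) by (apply le_INR; exact Hn). pose proof (pos_INR n). nra.
Qed.

Lemma p_gt_recursion delta n k : -1 < delta -> (1 <= n)%nat ->
  INR (S n) * p_gt delta (S k) =
  (1 - attach_weight delta n (S k)) * (INR n * p_gt delta (S k)) +
  attach_weight delta n (S k) * (INR n * p_gt delta k).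
Proof.
  intros Hd Hn. assert (0 < INR n) by (apply lt_0_INR; lia). pose proof (pos_INR k).
  unfold attach_weight. simpl p_gt. rewrite !S_INR. field. lra.
Qed.

Lemma Rabs_convex_le t a b c : 0 <= t <= 1 -> Rabs a <= c -> Rabs b <= c ->
  Rabs ((1 - t) * a + t * b) <= c.
Proof.
  intros Ht Ha Hb. eapply Rle_trans; [apply Rabs_triang|].
  rewrite !Rabs_mult, (Rabs_pos_eq t), (Rabs_pos_eq (1 - t)) by lra. nra.
Qed.

Lemma expectation_N_gt_error delta m k : -1 < delta ->
  Rabs (expectation (modelA_law delta m) (N_gt k) - INR (S m) * p_gt delta k) <= 1.
Proof.
  intros Hd. revert k; induction m as [|m IH]; intros k.
  - pose proof (p_gt_mul_le delta 1 k Hd ltac:(lia)).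
    apply Rabs_le. unfold expectation, N_gt. simpl.
    destruct (Nat.ltb k 2); simpl in *; lra.
  - destruct k as [|k].
    + rewrite expectation_N_gt_0 by exact Hd. simpl p_gt.
      rewrite Rmult_1_r, Rminus_diag, Rabs_R0. lra.
    + destruct (le_lt_dec k (S m)) as [Hsmall|Hlarge].
      * rewrite expectation_N_gt_succ, p_gt_recursion by (exact Hd || lia).
        set (w := attach_weight delta (S m) (S k)).
        replace (_ - _) with
          ((1 - w) * (expectation (modelA_law delta m) (N_gt (S k)) - INR (S m) * p_gt delta (S k))
           + w * (expectation (modelA_law delta m) (N_gt k) - INR (S m) * p_gt delta k)) by ring.
        apply Rabs_convex_le; [apply attach_weight_bounds; lia || exact Hd | apply IH..].
      * rewrite expectation_N_gt_above by lia.
        pose proof (p_gt_mul_le delta (S (S m)) (S k) Hd ltac:(lia)).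
        apply Rabs_le. lra.
Qed.

Theorem mainTheorem7 (delta : R) (hdelta : -1 < delta) :
  exists C' : R, 0 < C' /\
    forall n k : nat, (1 <= n)%nat -> (1 <= k)%nat ->
      Rabs (expect delta n (N_gt k) - INR n * p_gt delta k) <= C'.
Proof.
  exists 1. split; [lra|]. intros [|m] k Hn _; [lia|].
  unfold expect. replace (S m - 1)%nat with m by lia.
  exact (expectation_N_gt_error delta m k hdelta).
Qed.
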